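(* Let $X$ be a Tychonoff space and let $\mathcal{H}$ be a subspace with $\mathcal{F}_2(X)\subset\mathcal{H}\subset\mathcal{K}(X)$. Then the following are equivalent: (a) $X$ is a $P$-space; (b) $\mathcal{H}$ is a $P$-space; (c) $\mathcal{H}$ is an $F'$-space.
   Context: For a $T_1$ space $X$, $\mathcal{K}(X)$ is the set of nonempty compact subsets of $X$ with the Vietoris topology (generated by $U^+=\{A: A\subset U\}$ and $U^-=\{A: A\cap U\neq\emptyset\}$ for $U$ open in $X$), and $\mathcal{F}_n(X)\subset\mathcal{K}(X)$ is the subspace of nonempty subsets with at most $n$ points. A point $p$ is a $P$-point of $X$ if $p$ lies in the interior of every $G_\delta$ set containing it; $X$ is a $P$-space if all its points are $P$-points. A cozero set is the complement of the zero set $f^{-1}(0)$ of a continuous real-valued function $f$. An $F'$-space is a Tychonoff space in which any two disjoint cozero sets have disjoint closures. *)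

From HB Require Import structures.
From mathcomp Require Import all_boot all_order all_algebra.
From mathcomp Require Import all_classical all_reals all_analysis.
Set Implicit Arguments. Unset Strict Implicit. Unset Printing Implicit Defensive.
Import Order.TTheory GRing.Theory Num.Theory.
Import numFieldTopology.Exports.
Local Open Scope classical_set_scope.
Local Open Scope ring_scope.

Definition Gdelta {T : topologicalType} (G : set T) : Prop :=
  exists U : nat -> set T, (forall n, open (U n)) /\ G = \bigcap_n U n.

Definition P_point {T : topologicalType} (p : T) : Prop :=
  forall G : set T, Gdelta G -> G p -> (G°) p.

Definition P_space (T : topologicalType) : Prop := forall p : T, P_point p.

Definition tychonoff_space (R : realType) (T : topologicalType) : Prop :=
  accessible_space T /\
  forall (x : T) (B : set T), closed B -> ~ B x ->
    exists f : T -> R, continuous f /\ f x = 0 /\ (forall b, B b -> f b = 1).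

Definition cozero_set (R : realType) {T : topologicalType} (C : set T) : Prop :=
  exists f : T -> R, continuous f /\ C = ~` (f @^-1` [set 0]).

Definition F'_space (R : realType) (T : topologicalType) : Prop :=
  tychonoff_space R T /\
  forall C1 C2 : set T, cozero_set R C1 -> cozero_set R C2 ->
    C1 `&` C2 = set0 -> closure C1 `&` closure C2 = set0.

(** The type of (all) subsets of X, to be equipped with the Vietoris
    topology generated by U^+ and U^- for U open in X. K(X) and F_n(X)
    are then subsets of this space, with the subspace topology. *)
Definition hyperspace (X : topologicalType) : Type := set X.

Section Vietoris.
Context (X : topologicalType).

HB.instance Definition _ := Choice.copy (hyperspace X) (set X).
HB.instance Definition _ := Pointed.copy (hyperspace X) (set X).

Definition upper (U : set X) : set (hyperspace X) := [set A | A `<=` U].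
Definition lower (U : set X) : set (hyperspace X) := [set A | A `&` U !=set0].

Definition vietoris_subbase (i : bool * set X) : set (hyperspace X) :=
  if i.1 then upper i.2 else lower i.2.

HB.instance Definition _ :=
  isSubBaseTopological.Build (hyperspace X)
    (fun i : bool * set X => open i.2) vietoris_subbase.

End Vietoris.

Definition Kspace (X : topologicalType) : set (hyperspace X) :=
  [set A : hyperspace X | A !=set0 /\ compact A].

Definition Fspace (X : topologicalType) (n : nat) : set (hyperspace X) :=
  [set A : hyperspace X | A !=set0 /\
     exists s : seq X, (size s <= n)%N /\ A `<=` [set x | x \in s]].
Arguments Kspace : clear implicits.
Arguments Fspace : clear implicits.
Arguments F'_space : clear implicits.
Arguments tychonoff_space : clear implicits.
Arguments P_space : clear implicits.

From HB Require Import structures.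
From mathcomp Require Import all_boot all_order all_algebra.
From mathcomp Require Import all_classical all_reals all_analysis.
From mathcomp Require Import finmap ring lra.
Set Implicit Arguments. Unset Strict Implicit. Unset Printing Implicit Defensive.
Import Order.TTheory GRing.Theory Num.Theory.
Import numFieldTopology.Exports.
Local Open Scope classical_set_scope.
Local Open Scope ring_scope.

(** In a T1 P-space every countable set is closed, so an injective sequence in
    a compact set could have no cluster point: compact sets are finite.  At a
    finite set A, countably many Vietoris conditions on A reduce to one upper
    condition and one lower condition per point of A, each a countable
    intersection of open sets; hence the hyperspace is a P-space when X is,
    and it is Tychonoff because X has a base of clopen sets.  P-spaces are
    F'-spaces since their cozero sets are clopen.
    Conversely, X embeds in H through singletons.  If p is not a P-point of X,
    there is a continuous g >= 0 with g p = 0 whose zero set is not a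
    neighbourhood of p; then u A = 2 min_A g - max_A g is positive at {x} and
    negative at {p, x} whenever g x > 0, so the disjoint cozero sets
    {u > 0} and {u < 0} of H both accumulate at {p}. *)

Section P_points.
Context {T : topologicalType}.

Lemma P_pointP (p : T) : P_point p <->
  forall U : nat -> set T, (forall n, nbhs p (U n)) -> nbhs p (\bigcap_n U n).
Proof.
split=> [Pp U pU|Pp G [U [oU ->]] Gp].
  have /choice[V /all_and3[oV Vp VU]] : forall n, exists V : set T,
      [/\ open V, V p & V `<=` U n].
    by move=> n; have := pU n; rewrite nbhsE => -[V [oV Vp] VU]; exists V.
  apply: filterS (Pp (\bigcap_n V n) _ _) => [x Vx n _|//|n _ //].
    exact/VU/Vx.
  by exists V.
by apply: Pp => n; apply: open_nbhs_nbhs; split; [exact: oU|exact: Gp].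
Qed.

Lemma P_point_bigcap (p : T) (I : Type) (D : set I) (F : I -> set T) :
  P_point p -> countable D -> (forall i, D i -> nbhs p (F i)) ->
  nbhs p (\bigcap_(i in D) F i).
Proof.
move=> /P_pointP Pp /countable_injP[f finj] pF.
pose U n := \bigcap_(i in D `&` [set i | f i = n]) F i.
apply: filterS (Pp U _) => [x Ux i Di|n]; first by apply: (Ux (f i)).
have [[i [Di fin]]|noi] := pselect (exists i, D i /\ f i = n).
  apply: filterS (pF i Di) => x Fix j [Dj fjn].
  suff -> : j = i by [].
  by apply: finj; [exact: mem_set|exact: mem_set|rewrite fjn].
by apply: nearW => x j [Dj fjn]; case: noi; exists j.
Qed.

Lemma P_space_bigcap_open (I : Type) (D : set I) (F : I -> set T) :
  P_space T -> countable D -> (forall i, D i -> open (F i)) ->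
  open (\bigcap_(i in D) F i).
Proof.
move=> PT cD oF; rewrite openE => x Fx; apply: P_point_bigcap => // i Di.
by apply: open_nbhs_nbhs; split; [exact: oF|exact: Fx].
Qed.

End P_points.

Lemma P_point_initial {S T : topologicalType} (f : S -> T) (p : S) :
  continuous f ->
  (forall U, nbhs p U -> exists2 V, nbhs (f p) V & f @^-1` V `<=` U) ->
  P_point (f p) -> P_point p.
Proof.
move=> cf finit /P_pointP Pfp; apply/P_pointP => U pU.
have /choice[V /all_and2[fpV VU]] : forall n, exists V,
    nbhs (f p) V /\ f @^-1` V `<=` U n.
  by move=> n; have [V ? ?] := finit _ (pU n); exists V.
have pV : nbhs p (f @^-1` \bigcap_n V n) by apply: cf; exact: Pfp.
by apply: filterS pV => x Vx n _; exact/VU/Vx.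
Qed.

Section real_functions.
Context {R : realType} {T : topologicalType}.

Lemma has_sup_image (U : Type) (g : U -> R) (M : R) (A : set U) :
  A !=set0 -> (forall x, g x <= M) -> has_sup (g @` A).
Proof. by move=> [a Aa] gM; split; [exists (g a), a|exists M => _ [x _ <-]]. Qed.

Lemma has_sup_natSinv (c : nat -> R) :
  (forall n, 0 <= c n <= n.+1%:R^-1) -> has_sup (range c).
Proof.
move=> c_bnd; apply: (has_sup_image (M := 1)) => [|n]; first by exists 0%N.
by apply: le_trans (andP (c_bnd n)).2 _; rewrite invf_le1 // ler1n.
Qed.

Lemma uniform_approx_continuous (g : T -> R) :
  (forall e : R, 0 < e ->
    exists2 h : T -> R, continuous h & forall x, `|g x - h x| < e) ->
  continuous g.
Proof.
move=> approx x; apply/(@cvgrPdist_lt _ R^o) => e e0.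
have e3 : 0 < e / 3 by rewrite divr_gt0.
have [h ch hg] := approx _ e3.
have /(@cvgrPdist_lt _ R^o) /(_ _ e3) := ch x.
apply: filterS => y hxy.
have -> : g x - g y = (g x - h x) + (h x - h y) + (h y - g y) by ring.
have := hg x; have := hg y; rewrite distrC => hgy hgx.
have := ler_normD (g x - h x + (h x - h y)) (h y - g y).
have := ler_normD (g x - h x) (h x - h y); lra.
Qed.

Lemma continuous_sup_seq (c : nat -> T -> R) :
  (forall n, continuous (c n)) ->
  (forall n x, 0 <= c n x <= n.+1%:R^-1) ->
  continuous (fun x => sup (range (c ^~ x))).
Proof.
move=> c_cont c_bnd.
have sup_ge n x : c n x <= sup (range (c ^~ x)).
  by apply: (sup_upper_bound (has_sup_natSinv (c_bnd ^~ x))); exists n.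
pose cmax s x := \big[Num.max/0]_(n <- s) c n x.
have cmax_ge0 s x : 0 <= cmax s x.
  rewrite /cmax; elim/big_ind: _ => // [a b a0 _|n _]; first by rewrite le_max a0.
  exact: (andP (c_bnd n x)).1.
have cmax_cont s : continuous (cmax s).
  elim: s => [|n s IH].
    have -> : cmax [::] = fun=> 0 by apply/funext => x; rewrite /cmax big_nil.
    exact: cst_continuous.
  have -> : cmax (n :: s) = fun x => Num.max (c n x) (cmax s x).
    by apply/funext => x; rewrite /cmax big_cons.
  by move=> x; apply: continuous_max; [exact: c_cont|exact: IH].
apply: uniform_approx_continuous => e e0.
have [N _ /(_ N (leqnn N)) /= Ne] := near_infty_natSinv_lt (PosNum e0).
exists (cmax (iota 0 N)) => // x.
have max_le : cmax (iota 0 N) x <= sup (range (c ^~ x)).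
  apply: bigmax_le => [|n _]; last exact: sup_ge.
  exact: le_trans (andP (c_bnd 0%N x)).1 (sup_ge _ _).
have sup_le : sup (range (c ^~ x)) <= cmax (iota 0 N) x + N.+1%:R^-1.
  apply: ge_sup; first by exists (c 0%N x), 0%N.
  move=> _ [n _ <-]; have [nN|Nn] := ltnP n N.
    apply: (@le_trans _ _ (cmax (iota 0 N) x)); last by rewrite lerDl invr_ge0.
    by apply: le_bigmax_seq => //; rewrite mem_iota.
  apply: le_trans (andP (c_bnd n x)).2 _; apply: (@le_trans _ _ N.+1%:R^-1).
    by rewrite lef_pV2 ?posrE ?ltr0n // ler_nat.
  by rewrite lerDr cmax_ge0.
by rewrite ger0_norm ?subr_ge0 //; apply: le_lt_trans Ne; rewrite lerBlDl.
Qed.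

Lemma cozero_set_gt0 (u : T -> R) :
  continuous u -> cozero_set R [set x | 0 < u x].
Proof.
move=> cu; exists (fun x => Num.max (u x) 0); split.
  by move=> x; apply: continuous_max; [exact: cu|exact: cvg_cst].
apply/seteqP; split=> x /=.
  by move=> ux0; rewrite (max_idPl (ltW ux0)) => /eqP; rewrite gt_eqF.
by move=> nmax0; rewrite ltNge; apply/negP => /max_idPr.
Qed.

End real_functions.

Section P_space_real_functions.
Context {R : realType} {T : topologicalType}.

Lemma P_space_zero_set_open (f : T -> R) :
  P_space T -> continuous f -> open (f @^-1` [set 0]).
Proof.
move=> PT cf; rewrite openE => x /= fx0.
pose U n := [set y | `|f y| < n.+1%:R^-1].
apply: filterS (P_point_bigcap (PT x) (countableP [set: nat]) (F := U) _).
  move=> y Uy; apply: contrapT => /eqP fy0.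
  have fy_gt0 : 0 < `|f y| by rewrite normr_gt0.
  have [n _ /(_ n (leqnn n))] := near_infty_natSinv_lt (PosNum fy_gt0).
  by rewrite /= ltNge => /negP; apply; apply/ltW/(Uy n I).
move=> n _; have : f @ x --> (0 : R) by rewrite -fx0; exact: cf.
by move=> /cvgr0Pnorm_lt; apply; rewrite invr_gt0 ltr0n.
Qed.

Lemma P_space_cozero_closed (C : set T) :
  P_space T -> cozero_set R C -> closed C.
Proof. by move=> PT [f [cf ->]]; exact/open_closedC/P_space_zero_set_open. Qed.

Lemma P_space_F' : tychonoff_space R T -> P_space T -> F'_space R T.
Proof.
move=> TT PT; split=> // C1 C2 /(P_space_cozero_closed PT) cC1.
move=> /(P_space_cozero_closed PT) cC2.
by rewrite -(closure_id C1).1 // -(closure_id C2).1.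
Qed.

Lemma P_point_of_zero_sets (p : T) : tychonoff_space R T ->
  (forall g : T -> R, continuous g -> (forall x, 0 <= g x <= 1) -> g p = 0 ->
    nbhs p (g @^-1` [set 0])) ->
  P_point p.
Proof.
move=> TT zero_nbhs G [U [oU ->]] Gp.
have /choice[f fP] : forall n, exists f : T -> R,
    [/\ continuous f, f p = 0 & forall x, ~ U n x -> f x = 1].
  move=> n; have nUp : ~ (~` U n) p by apply; exact: Gp.
  by have [f [? [? ?]]] := TT.2 p _ (open_closedC (oU n)) nUp; exists f.
pose c n x := Num.min `|f n x| n.+1%:R^-1.
have c_bnd n x : 0 <= c n x <= n.+1%:R^-1.
  by rewrite le_min normr_ge0 invr_ge0 ler0n ge_min lexx orbT.
pose g x := sup (range (c ^~ x)).
have g_ge n x : c n x <= g x.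
  by apply: (sup_upper_bound (has_sup_natSinv (c_bnd ^~ x))); exists n.
have g_bnd x : 0 <= g x <= 1.
  rewrite (le_trans (andP (c_bnd 0%N x)).1 (g_ge 0%N x)) /=.
  apply: ge_sup; first by exists (c 0%N x), 0%N.
  move=> _ [m _ <-]; apply: le_trans (andP (c_bnd m x)).2 _.
  by rewrite invf_le1 // ler1n.
have gp0 : g p = 0.
  apply/eqP; rewrite eq_le (andP (g_bnd p)).1 andbT.
  apply: ge_sup; first by exists (c 0%N p), 0%N.
  by move=> _ [m _ <-]; rewrite /c; have [_ -> _] := fP m; rewrite normr0 ge_min lexx.
have g_cont : continuous g.
  apply: continuous_sup_seq => // n x.
  apply: (@continuous_min _ _ (fun x => `|f n x|) (fun=> n.+1%:R^-1)); last exact: cvg_cst.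
  by have [fc _ _] := fP n; exact: cvg_norm (fc x).
apply: filterS (zero_nbhs g g_cont g_bnd gp0) => x /= gx0 n _.
apply: contrapT => nUx; have := g_ge n x; rewrite gx0 /c.
have [_ _ ->] := fP n; rewrite // normr1 (min_idPr _) ?invf_le1 ?ler1n //.
by rewrite leNgt invr_gt0 ltr0n.
Qed.

End P_space_real_functions.

Lemma infinite_set_inj_seq (U : Type) (A : set U) : infinite_set A ->
  exists2 d : nat -> U, (forall n, A (d n)) & injective d.
Proof.
move=> /infiniteP/card_leP[f].
exists (fun n => val (f (SigSub (in_setT n)))) => [n|m n]; first exact: set_valP.
move=> /val_inj/(@inj _ _ _ f) fmn.
by have /(congr1 val) := fmn (in_setT _) (in_setT _).
Qed.

Section T1_P_space.
Context {T : topologicalType}.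
Hypotheses (T1 : accessible_space T) (PT : P_space T).

Lemma P_space_countable_closed (A : set T) : countable A -> closed A.
Proof.
move=> cA; rewrite -[A]setCK; apply: open_closedC.
have -> : ~` A = \bigcap_(a in A) ~` [set a].
  apply/seteqP; split=> [x nAx a Aa xa|x Ax Ax']; last exact: (Ax _ Ax').
  by apply: nAx; rewrite xa.
apply: P_space_bigcap_open => // a _.
exact/closed_openC/accessible_closed_set1.
Qed.

Lemma P_space_compact_finite (A : set T) : compact A -> finite_set A.
Proof.
move=> cA; apply: contrapT => /infinite_set_inj_seq[d dA dinj].
pose tail n := d @` [set m | (n <= m)%N].
have [x [Ax clx]] : A `&` cluster (d @ \oo) !=set0.
  by apply: cA; exists 0%N => // n _; exact: dA.
have tail_x n : tail n x.
  have ctail : countable (tail n `\` [set x]).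
    apply: (card_le_trans (subset_card_le (@subDsetl _ _ _))).
    exact: (card_le_trans (card_image_le _ _) (subset_card_le (@subsetT _ _))).
  have xC : nbhs x (~` (tail n `\` [set x])).
    apply: open_nbhs_nbhs; split; last by move=> [_ /(_ erefl)].
    exact: closed_openC (P_space_countable_closed ctail).
  have tn : (d @ \oo) (tail n) by exists n => // m nm; exists m.
  have [y [tny nCy]] := clx _ _ tn xC.
  suff <- : y = x by [].
  by apply: contrapT => yx; exact: nCy.
have [m0 _ xm0] := tail_x 0%N; have [m1 m0m1 xm1] := tail_x m0.+1.
by move: m0m1; rewrite /= (dinj m1 m0) ?ltnn // xm0 xm1.
Qed.

End T1_P_space.

Section tychonoff_P_space.
Context {R : realType} {T : topologicalType}.
Hypotheses (TT : tychonoff_space R T) (PT : P_space T).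

Lemma P_space_clopen_nbhs (U : set T) (x : T) : open U -> U x ->
  exists2 C, clopen C & C x /\ C `<=` U.
Proof.
move=> oU Ux.
have [f [cf [fx0 f1]]] := TT.2 x (~` U) (open_closedC oU) (fun nUx => nUx Ux).
exists (f @^-1` [set 0]); first split.
- exact: P_space_zero_set_open.
- by apply: preimage_closed; [move=> y _; exact: cf|exact: closed_eq].
split=> // y /= fy0; apply: contrapT => /f1.
by rewrite fy0 => /eqP; rewrite eq_sym oner_eq0.
Qed.

Lemma P_space_finite_clopen_nbhs (A U : set T) : finite_set A -> open U ->
  A `<=` U -> exists2 C, clopen C & A `<=` C /\ C `<=` U.
Proof.
move=> fA oU AU.
have /choice[C CP] : forall a, exists C, A a -> [/\ clopen C, C a & C `<=` U].
  move=> a; have [Aa|] := pselect (A a); last by exists set0.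
  by have [C ? [? ?]] := P_space_clopen_nbhs oU (AU a Aa); exists C.
exists (\bigcup_(a in A) C a); first split.
- by apply: bigcup_open => a /CP[[]].
- by apply: closed_bigcup => // a /CP[[]].
split=> [a Aa|y [a /CP[_ _ CU]]]; last exact: CU.
by exists a => //; have [] := CP a Aa.
Qed.

End tychonoff_P_space.

Lemma clopen_base_creg (R : realType) (T : topologicalType) :
  (forall (U : set T) x, open U -> U x -> exists2 C, clopen C & C x /\ C `<=` U) ->
  forall (x : T) (B : set T), closed B -> ~ B x ->
    exists f : T -> R, continuous f /\ f x = 0 /\ (forall b, B b -> f b = 1).
Proof.
move=> base x B cB nBx.
have [C [oC cC] [Cx CB]] := base (~` B) x (closed_openC cB) nBx.
exists (fun y => if `[< C y >] then 0 else 1); split; last split.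
- move=> y; have [Cy|nCy] := pselect (C y).
    apply: (near_cst_continuous (0 : R)).
    by apply: filterS (open_nbhs_nbhs (conj oC Cy)) => z Cz; rewrite asboolT.
  apply: (near_cst_continuous (1 : R)).
  apply: filterS (open_nbhs_nbhs (conj (closed_openC cC) nCy)) => z nCz.
  by rewrite asboolF.
- by rewrite asboolT.
- by move=> b Bb; rewrite asboolF // => /CB.
Qed.

Section vietoris_topology.
Context {X : topologicalType}.
Implicit Types (U : set X) (A : hyperspace X).

Lemma open_vietoris_finI (S : set (hyperspace X)) :
  finI_from (fun i : bool * set X => open i.2) (@vietoris_subbase X) S ->
  open S.
Proof. by move=> finS; exists [set S]; [move=> _ ->|rewrite bigcup_set1]. Qed.

Lemma open_upper U : open U -> open (upper U).
Proof. by move=> oU; apply: open_vietoris_finI (@finI_from1 _ _ _ _ (true, U) oU). Qed.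

Lemma open_lower U : open U -> open (lower U).
Proof. by move=> oU; apply: open_vietoris_finI (@finI_from1 _ _ _ _ (false, U) oU). Qed.

Lemma upperC U : ~` upper U = lower (~` U).
Proof.
apply/seteqP; split=> A /=; last by move=> [x [Ax nUx]] /(_ x Ax).
by move=> /existsNP[x /not_implyP[Ax nUx]]; exists x.
Qed.

Lemma lowerC U : ~` lower U = upper (~` U).
Proof.
apply/seteqP; split=> A /=; last by move=> AnU [x [Ax Ux]]; exact: AnU x Ax Ux.
by move=> nAU x Ax Ux; apply: nAU; exists x.
Qed.

Lemma closed_upper U : closed U -> closed (upper U).
Proof.
move=> cU; rewrite -[upper U]setCK upperC.
exact/open_closedC/open_lower/closed_openC.
Qed.

Lemma closed_lower U : closed U -> closed (lower U).
Proof.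
move=> cU; rewrite -[lower U]setCK lowerC.
exact/open_closedC/open_upper/closed_openC.
Qed.

Lemma clopen_vietoris_subbase (i : bool * set X) :
  clopen i.2 -> clopen (vietoris_subbase i).
Proof.
case: i => -[] U [oU cU] /=; split.
- exact: open_upper.
- exact: closed_upper.
- exact: open_lower.
- exact: closed_lower.
Qed.

Lemma vietoris_subbaseS (b : bool) U V : U `<=` V ->
  vietoris_subbase (b, U) `<=` vietoris_subbase (b, V).
Proof.
move=> UV B; case: b => /= [BU x /BU/UV //|[x [Bx Ux]]].
by exists x; split=> //; exact: UV.
Qed.

Lemma vietoris_nbhsP A (N : set (hyperspace X)) : nbhs A N <->
  exists D : {fset bool * set X},
    (forall i, i \in D -> open i.2 /\ vietoris_subbase i A) /\
    \bigcap_(i in [set` D]) vietoris_subbase i `<=` N.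
Proof.
split=> [|[D [DA DN]]].
  rewrite nbhsE; move=> -[W [[S0 S0fin <-] [S S0S SA]] WN].
  have [D Dop DS] := S0fin S S0S.
  exists D; split=> [i iD|B DB]; last by apply: WN; exists S => //; rewrite -DS.
  by split; [exact/set_mem/Dop|move: SA; rewrite -DS; exact].
apply: (filterS DN); apply: open_nbhs_nbhs; split; last by move=> i /DA[].
by apply: open_vietoris_finI; exists D => // i /DA[oi _]; exact: mem_set.
Qed.

Lemma vietoris_P_point_finite A : P_space X -> finite_set A -> P_point A.
Proof.
move=> PX fA; apply/P_pointP => N AN.
have /choice[D DP] := fun n => (vietoris_nbhsP A (N n)).1 (AN n).
pose idx := \bigcup_n [set` D n].
have idx_open i : idx i -> open i.2 by move=> [n _ /(DP n).1[]].
have idx_countable J : J `<=` idx -> countable J.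
  move=> Jidx; apply: (sub_countable (subset_card_le Jidx)).
  by apply: bigcup_countable => // n _; exact/finite_set_countable/finite_fset.
pose Up := \bigcap_(i in idx `&` [set i : bool * set X | i.1]) i.2.
pose W a := \bigcap_(i in idx `&` [set i : bool * set X | ~~ i.1 /\ i.2 a]) i.2.
apply: (@filterS _ _ _ (upper Up `&` \bigcap_(a in A) lower (W a))).
  move=> B [BUp BW] n _; apply: (DP n).2 => -[[] V] iD /=.
    by move=> x Bx; apply: (BUp x Bx); split=> //; exists n.
  have [_ [a [Aa Va]]] := (DP n).1 _ iD.
  have [b [Bb Wb]] := BW a Aa.
  by exists b; split=> //; apply: Wb; split=> //; exists n.
apply: filterI.
  apply: open_nbhs_nbhs; split.
    apply/open_upper/P_space_bigcap_open => //; first exact: idx_countable.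
    by move=> i [/idx_open].
  move=> a Aa i [[n _ iD]]; have [_] := (DP n).1 _ iD.
  by case: i iD => -[] V //= _ /(_ a Aa).
rewrite -[X in \bigcap_(a in X) _](fset_setK fA); apply: filter_bigI => a.
rewrite in_fset_set // => /set_mem Aa; apply: open_nbhs_nbhs; split.
  apply/open_lower/P_space_bigcap_open => //; first exact: idx_countable.
  by move=> i [/idx_open].
by exists a; split=> // i [_ []].
Qed.

Lemma continuous_setU1 (S : set X) :
  continuous (fun x : X => S `|` [set x] : hyperspace X).
Proof.
move=> x N /vietoris_nbhsP[D [DS DN]].
have : nbhs x (\bigcap_(i in [set` D]) [set y | vietoris_subbase i (S `|` [set y])]).
  apply: filter_bigI => -[b V] /DS[/= oV]; have [Vx|nVx] := pselect (V x).
    move=> Sx; apply: filterS (open_nbhs_nbhs (conj oV Vx)) => y Vy.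
    case: b Sx => /= [SxV z [Sz|->//]|_]; first exact: SxV z (or_introl Sz).
    by exists y; split=> //; right.
  move=> Sx; apply: nearW => y; case: b Sx => /= [/(_ x (or_intror erefl))//|].
  by move=> [z [[Sz|zx] Vz]]; [exists z; split=> //; left|rewrite zx in Vz].
by apply: filterS => y Dy; apply: DN => i /Dy.
Qed.

Lemma vietoris_clopen_nbhs (R : realType) A (O : set (hyperspace X)) :
  tychonoff_space R X -> P_space X -> finite_set A -> open O -> O A ->
  exists2 C, clopen C & C A /\ C `<=` O.
Proof.
move=> TX PX fA oO OA.
have /vietoris_nbhsP[D [DA DO]] := open_nbhs_nbhs (conj oO OA).
have /choice[K KP] : forall i : bool * set X, exists K, i \in D ->
    [/\ clopen K, vietoris_subbase (i.1, K) A & K `<=` i.2].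
  move=> [b V]; have [/DA[/= oV]|] := boolP ((b, V) \in D); last by exists set0.
  case: b => /= [AV|[a [Aa Va]]].
    by have [K ? [? ?]] := P_space_finite_clopen_nbhs TX PX fA oV AV; exists K.
  have [K ? [Ka ?]] := P_space_clopen_nbhs TX PX oV Va.
  by exists K => _; split=> //; exists a.
pose C := \bigcap_(i in [set` D]) vietoris_subbase (i.1, K i).
have clopen_sub i : i \in D -> clopen (vietoris_subbase (i.1, K i)).
  by move=> /KP[cK _ _]; exact: clopen_vietoris_subbase.
exists C; first split.
- rewrite openE => B CB; apply: filter_bigI => i iD.
  by apply: open_nbhs_nbhs; split; [exact: (clopen_sub i iD).1|exact: CB].
- by apply: closed_bigI => i /clopen_sub[].
split=> [i /KP[]//|B CB]; apply: DO => -[b V] iD.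
by have [_ _ KV] := KP _ iD; apply: vietoris_subbaseS KV _ (CB _ iD).
Qed.

Lemma vietoris_separate A (B : hyperspace X) :
  accessible_space X -> closed B -> A <> B ->
  exists2 O : set (hyperspace X), open O & O A /\ ~ O B.
Proof.
move=> T1 cB AB; have [[b [Bb nAb]]|BA] := pselect (exists b, B b /\ ~ A b).
  exists (upper (~` [set b])).
    exact/open_upper/closed_openC/accessible_closed_set1.
  by split=> [a Aa ab|/(_ b Bb)]; [apply: nAb; rewrite -ab|apply].
have [a Aa nBa] : exists2 a, A a & ~ B a.
  apply: contrapT => nex; apply: AB; apply/seteqP; split=> x.
    by move=> Ax; apply: contrapT => nBx; apply: nex; exists x.
  by move=> Bx; apply: contrapT => nAx; apply: BA; exists x.
exists (lower (~` B)); first exact/open_lower/closed_openC.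
by split=> [|[x [Bx nBx]]]; [exists a|].
Qed.

End vietoris_topology.

Section hyperspace_subspace.
Context {X : topologicalType} (H : set (hyperspace X)).

Lemma open_set_typeP (U : set (set_type H)) :
  open U <-> exists2 O : set (hyperspace X), open O & U = val @^-1` O.
Proof. by split=> [[V oV <-]|[V oV ->]]; exists V. Qed.

Lemma continuous_set_val : continuous (val : set_type H -> hyperspace X).
Proof. exact: initial_continuous. Qed.

Lemma continuous_setU1_in (S : set X) (HS : forall x, H (S `|` [set x])) :
  continuous (fun x => SigSub (mem_set (HS x)) : set_type H).
Proof. by apply: continuous_comp_initial; exact: continuous_setU1. Qed.

Lemma hyperspace_P_space : accessible_space X -> P_space X ->
  H `<=` Kspace X -> P_space (set_type H).
Proof.
move=> T1 PX HK A; apply: (P_point_initial continuous_set_val).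
  move=> U; rewrite nbhsE => -[W [/open_set_typeP[V oV ->] VA] VU].
  by exists V => //; exact: open_nbhs_nbhs.
apply: vietoris_P_point_finite => //; apply: P_space_compact_finite => //.
exact: (HK _ (set_valP A)).2.
Qed.

Lemma P_space_of_hyperspace : (forall x, H (set0 `|` [set x])) ->
  P_space (set_type H) -> P_space X.
Proof.
move=> H1 PH p.
apply: (P_point_initial (continuous_setU1_in (HS := H1))); last exact: PH.
move=> U; rewrite nbhsE => -[V [oV Vp] VU].
exists (val @^-1` upper V); last by move=> x /= /(_ x (or_intror erefl)) /VU.
apply: open_nbhs_nbhs; split; last by move=> x /= [//|->].
by apply/open_set_typeP; exists (upper V) => //; exact: open_upper.
Qed.

Lemma hyperspace_tychonoff (R : realType) : tychonoff_space R X -> P_space X ->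
  H `<=` Kspace X -> tychonoff_space R (set_type H).
Proof.
move=> TX PX HK.
have finH (A : set_type H) : finite_set (val A).
  exact/(P_space_compact_finite TX.1 PX)/(HK _ (set_valP A)).2.
split.
  move=> A B AB.
  have [||O oO [OA nOB]] := vietoris_separate (A := val A) (B := val B) TX.1.
  - exact: P_space_countable_closed TX.1 PX _ (finite_set_countable (finH B)).
  - by move=> /val_inj eAB; rewrite eAB eqxx in AB.
  exists (val @^-1` O); split; [|exact: mem_set|exact: mem_set].
  by apply/open_set_typeP; exists O.
apply: clopen_base_creg => U A /open_set_typeP[W oW ->] WA.
have [C cC [CA CW]] := vietoris_clopen_nbhs TX PX (finH A) oW WA.
exists (val @^-1` C); last by split=> // B /CW.
exact: preimage_clopen cC continuous_set_val.
Qed.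

Lemma continuous_hyperspace_sup (R : realType) (g : X -> R) (M : R) :
  H `<=` [set A | A !=set0] -> continuous g -> (forall x, g x <= M) ->
  continuous (fun A : set_type H => sup (g @` val A)).
Proof.
move=> Hne cg gM A; apply/(@cvgrPdist_lt _ R^o _ _ (nbhs_filter A)) => e e0.
have e2 : 0 < e / 2 by rewrite divr_gt0.
have hs (B : set_type H) := has_sup_image (Hne _ (set_valP B)) gM.
set s := sup (g @` val A).
have [_ [a Aa <-] ga] := sup_adherent e2 (hs A).
pose N := upper (g @^-1` [set r | r < s + e / 2]) `&`
          lower (g @^-1` [set r | s - e / 2 < r]).
have AN : nbhs A (val @^-1` N).
  apply: open_nbhs_nbhs; split.
    apply/open_set_typeP; exists N => //; apply: openI.
      by apply: open_upper; move/continuousP : cg; apply; exact: open_lt.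
    by apply: open_lower; move/continuousP : cg; apply; exact: open_gt.
  split; last by exists a.
  move=> z Az /=; apply: (@le_lt_trans _ _ s); last by rewrite ltrDl.
  by apply: (sup_upper_bound (hs A)); exists z.
apply: (@filterS _ _ (nbhs_filter A) _ _ _ AN) => B [BU [b [Bb /= gb]]].
have gbB : g b <= sup (g @` val B) by apply: (sup_upper_bound (hs B)); exists b.
have supB : sup (g @` val B) <= s + e / 2.
  by apply: ge_sup; [exists (g b), b|move=> _ [z /BU /ltW gz <-]].
by rewrite ltr_distlC; apply/andP; split; lra.
Qed.

End hyperspace_subspace.

Lemma Fspace2_setU1 (X : topologicalType) (S : set X) (a x : X) :
  S `<=` [set a] -> Fspace X 2 (S `|` [set x]).
Proof.
move=> Sa; split; first by exists x; right.
by exists [:: a; x]; split=> // z [/Sa ->|->] /=; rewrite !inE eqxx ?orbT.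
Qed.

Lemma F'_hyperspace_zero_set_nbhs (R : realType) (X : topologicalType)
    (H : set (hyperspace X)) (g : X -> R) (p : X) :
  Fspace X 2 `<=` H -> H `<=` [set A | A !=set0] -> F'_space R (set_type H) ->
  continuous g -> (forall x, 0 <= g x <= 1) -> g p = 0 ->
  nbhs p (g @^-1` [set 0]).
Proof.
move=> FH Hne [_ F'H] cg g01 gp0; apply: contrapT => nZ.
have near_pos V : nbhs p V -> exists2 x, V x & 0 < g x.
  move=> pV; apply: contrapT => nex; apply: nZ; apply: filterS pV => x Vx /=.
  apply/eqP; rewrite eq_le (andP (g01 x)).1 andbT leNgt; apply/negP => gx0.
  by apply: nex; exists x.
pose u (A : set_type H) := - 2 * sup ((fun x => - g x) @` val A) - sup (g @` val A).
have g_le1 x : g x <= 1 by have /andP[] := g01 x.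
have Ng_le0 x : - g x <= 0 by rewrite oppr_le0; have /andP[] := g01 x.
have cu : continuous u.
  have cNg : continuous (fun x => - g x) by move=> x; apply: cvgN; exact: cg.
  move=> A; have FA := @nbhs_filter (set_type H) A.
  apply: cvgB; last exact: (continuous_hyperspace_sup Hne cg g_le1).
  apply: cvgM; first exact: cvg_cst.
  exact: (continuous_hyperspace_sup Hne cNg Ng_le0).
have H1 x : H (set0 `|` [set x]).
  by apply/FH/(Fspace2_setU1 (a := x)); exact: sub0set.
have H2 x : H ([set p] `|` [set x]) by exact/FH/(Fspace2_setU1 (a := p)).
pose s1 x : set_type H := SigSub (mem_set (H1 x)).
pose s2 x : set_type H := SigSub (mem_set (H2 x)).
have s21 : s2 p = s1 p by apply: val_inj; rewrite /= set0U setUid.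
have u_s1 x : 0 < g x -> 0 < u (s1 x).
  have sup_le (f : X -> R) : sup (f @` (set0 `|` [set x])) <= f x.
    apply: ge_sup => [|_ [y [//|->] <-] //].
    by exists (f x), x => //; right.
  by move=> gx0; rewrite /u /=; have := sup_le g; have := sup_le (fun x => - g x); lra.
have u_s2 x : 0 < g x -> u (s2 x) < 0.
  have sup_ge (f : X -> R) M y : (forall z, f z <= M) -> ([set p] `|` [set x]) y ->
      f y <= sup (f @` ([set p] `|` [set x])).
    move=> fM xy; apply: (sup_upper_bound (has_sup_image _ fM)); last by exists y.
    by exists p; left.
  move=> gx0; rewrite /u /=.
  have := @sup_ge g 1 x g_le1 (or_intror erefl).
  have := @sup_ge (fun x => - g x) 0 p Ng_le0 (or_introl erefl).
  rewrite gp0 oppr0; lra.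
have cl_pos : closure [set A | 0 < u A] (s1 p).
  move=> B /(@continuous_setU1_in _ H _ H1 p) /near_pos[x Bx gx0].
  by exists (s1 x); split=> //; exact: u_s1.
have cl_neg : closure [set A | 0 < - u A] (s1 p).
  move=> B; rewrite -s21 => /(@continuous_setU1_in _ H _ H2 p) /near_pos[x Bx gx0].
  by exists (s2 x); split=> //=; rewrite oppr_gt0; exact: u_s2.
have cNu : continuous (fun A => - u A).
  by move=> A; have FA := @nbhs_filter (set_type H) A; apply: cvgN; exact: cu.
have disj : [set A | 0 < u A] `&` [set A | 0 < - u A] = set0.
  by apply/seteqP; split=> // A [/= uA]; rewrite oppr_gt0 => /(lt_trans uA); rewrite ltxx.
have := F'H _ _ (cozero_set_gt0 cu) (cozero_set_gt0 cNu) disj.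
by move=> /seteqP[/(_ (s1 p) (conj cl_pos cl_neg))].
Qed.

Theorem theorem3p7 (R : realType) (X : topologicalType)
    (H : set (hyperspace X)) :
  tychonoff_space R X ->
  Fspace X 2 `<=` H -> H `<=` Kspace X ->
  [/\ (P_space X <-> P_space (set_type H)),
      (P_space (set_type H) <-> F'_space R (set_type H)) &
      (F'_space R (set_type H) <-> P_space X)].
Proof.
move=> TX FH HK.
have H1 x : H (set0 `|` [set x]).
  by apply/FH/(Fspace2_setU1 (a := x)); exact: sub0set.
have PXH : P_space X -> P_space (set_type H).
  by move=> PX; exact: hyperspace_P_space TX.1 PX HK.
have PHX : P_space (set_type H) -> P_space X := P_space_of_hyperspace H1.
have PXF : P_space X -> F'_space R (set_type H).
  by move=> PX; exact: P_space_F' (hyperspace_tychonoff TX PX HK) (PXH PX).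
have FPX : F'_space R (set_type H) -> P_space X.
  move=> F'H p; apply: (P_point_of_zero_sets TX) => g cg g01 gp0.
  by apply: F'_hyperspace_zero_set_nbhs FH _ F'H cg g01 gp0 => A /HK[].
split; split.
- exact: PXH.
- exact: PHX.
- by move=> /PHX; exact: PXF.
- by move=> /FPX; exact: PXH.
- exact: FPX.
- exact: PXF.
Qed.
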